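(* Let $n\ge 1$ and let $f\in\mathcal{G}_1$ be $n$-ary, $f=2x_1\cdots x_n\left(\sum_{i=1}^n a_ix_i^2+\sum_{i=1}^n b_ix_i+c\right)$, with $a_i\neq0$ for some $i$. Then $2u_n\in C(f)$, where $u_n=x_1\cdots x_n(x_1+1)$.
   Context: All operations are on $\mathbb{Z}_8$. $\mathcal{G}_1$ is the set of all operations (of any arity $n\ge1$) of the form $2x_1\cdots x_n\left(\sum_{i=1}^n a_ix_i^2+\sum_{i=1}^n b_ix_i+c\right)$ with $a_i,b_i\in\{0,1\}$ and $c\in\{0,1,2,3\}$. For an operation $f$, $C(f)$ denotes the clone generated by $f$ together with binary addition and all unary constant operations. *)

From mathcomp Require Import all_boot all_order all_algebra.
Set Implicit Arguments. Unset Strict Implicit. Unset Printing Implicit Defensive.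
Import GRing.Theory.
Local Open Scope ring_scope.

Definition op (k : nat) := ('I_k -> 'Z_8) -> 'Z_8.

Inductive term (n k : nat) : Type :=
| TVar of 'I_k
| TConst of 'Z_8
| TAdd of term n k & term n k
| TF of ('I_n -> term n k).

Fixpoint teval (n k : nat) (F : op n) (t : term n k) (x : 'I_k -> 'Z_8) : 'Z_8 :=
  match t with
  | TVar i => x i
  | TConst c => c
  | TAdd t1 t2 => teval F t1 x + teval F t2 x
  | TF ts => F (fun j => teval F (ts j) x)
  end.

(* C(F): the clone generated by F, + and all unary constants; its k-ary
   members are exactly the k-ary term operations. *)
Definition in_C (n : nat) (F : op n) (k : nat) (g : op k) : Prop :=
  exists t : term n k, forall x, teval F t x = g x.

Definition G1op (n : nat) (a b : 'I_n -> bool) (c : nat) : op n :=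
  fun x => 2 * (\prod_(i < n) x i) *
           (\sum_(i < n) (a i)%:R * x i ^+ 2 + \sum_(i < n) (b i)%:R * x i + c%:R).

(* u_n = x_1 ... x_n (x_1 + 1), with x_1 the variable of index 0. *)
Definition u_op (n : nat) (hn : (0 < n)%N) : op n :=
  fun x => (\prod_(i < n) x i) * (x (Ordinal hn) + 1).

From mathcomp Require Import all_boot all_order all_algebra.
From mathcomp Require Import perm ring.
Import GRing.Theory.
Set Implicit Arguments. Unset Strict Implicit.
Local Open Scope ring_scope.

(* Pick a variable x_k with a_k = 1 and move it to the slot of x_1.  Then
   g(t) := f(..., t at slot k, ...) = 2 t P (t^2 + b_k t + Q), where P and Q
   do not involve t, and the polarization g(X + v) - g(X) - g(v) equals
   2 P (3 X^2 v + 3 X v^2 + 2 b_k X v), in which Q has cancelled.  Taking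
   v = 3 if b_k = 1 and v = 1 otherwise turns this into 2 P X (X + 1) modulo 8,
   i.e. into 2 u_n. *)

Section CloneClosure.

Variables (n k : nat) (F : op n).

Lemma in_C_ext (g h : op k) : (forall x, g x = h x) -> in_C F g -> in_C F h.
Proof. by move=> gh [t Ht]; exists t => x; rewrite Ht gh. Qed.

Lemma in_C_var (i : 'I_k) : in_C F (fun x => x i).
Proof. by exists (TVar n i). Qed.

Lemma in_C_const (c : 'Z_8) : in_C F (fun _ : 'I_k -> 'Z_8 => c).
Proof. by exists (TConst n k c). Qed.

Lemma in_C_add (g h : op k) :
  in_C F g -> in_C F h -> in_C F (fun x => g x + h x).
Proof. by move=> [t Ht] [s Hs]; exists (TAdd t s) => x /=; rewrite Ht Hs. Qed.

Lemma in_C_natmul (g : op k) m : in_C F g -> in_C F (fun x => g x *+ m).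
Proof.
move=> Cg; elim: m => [|m IHm]; first exact: in_C_const.
by apply: in_C_ext (in_C_add Cg IHm) => x; rewrite mulrS.
Qed.

Lemma in_C_opp (g : op k) : in_C F g -> in_C F (fun x => - g x).
Proof.
move=> /(in_C_natmul 7); apply: in_C_ext => x.
apply/eqP; rewrite -subr_eq0 opprK -mulrSr -mulr_natr.
have -> : 8%:R = 0 :> 'Z_8 by apply/eqP.
by rewrite mulr0.
Qed.

Lemma in_C_sub (g h : op k) :
  in_C F g -> in_C F h -> in_C F (fun x => g x - h x).
Proof. by move=> Cg /in_C_opp; apply: in_C_add. Qed.

Hypothesis F_ext : forall w w', w =1 w' -> F w = F w'.

Lemma in_C_comp (hs : 'I_n -> op k) :
  (forall j, in_C F (hs j)) -> in_C F (fun x => F (fun j => hs j x)).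
Proof.
by move=> /fin_all_exists [ts Hts]; exists (TF ts) => x /=; apply: F_ext => j.
Qed.

End CloneClosure.

Section G1Slot.

Variables (n : nat) (a b : 'I_n -> bool) (c : nat).

Lemma G1op_ext (w w' : 'I_n -> 'Z_8) : w =1 w' -> G1op a b c w = G1op a b c w'.
Proof.
by move=> ww'; rewrite /G1op; congr (2 * _ * (_ + _ + _));
  apply: eq_bigr => i _; rewrite ww'.
Qed.

Lemma G1op_slot (k : 'I_n) (y : 'I_n -> 'Z_8) : exists P Q,
  \prod_i y i = y k * P /\
  forall w, (forall j, j != k -> w j = y j) ->
    G1op a b c w = 2 * w k * P * ((a k)%:R * w k ^+ 2 + (b k)%:R * w k + Q).
Proof.
exists (\prod_(j | j != k) y j).
exists (\sum_(j | j != k) (a j)%:R * y j ^+ 2 + \sum_(j | j != k) (b j)%:R * y j + c%:R).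
split=> [|w wy]; first by rewrite (bigD1 k).
rewrite /G1op (bigD1 k) // [\sum_i (a i)%:R * _](bigD1 k) //.
rewrite [\sum_i (b i)%:R * _](bigD1 k) //=.
have -> : \prod_(j | j != k) w j = \prod_(j | j != k) y j.
  by apply: eq_bigr => j /wy.
have -> : \sum_(j | j != k) (a j)%:R * w j ^+ 2 = \sum_(j | j != k) (a j)%:R * y j ^+ 2.
  by apply: eq_bigr => j /wy ->.
have -> : \sum_(j | j != k) (b j)%:R * w j = \sum_(j | j != k) (b j)%:R * y j.
  by apply: eq_bigr => j /wy ->.
ring.
Qed.

End G1Slot.

Lemma cubic_polarization (R : comPzRingType) (P Q beta X v : R) :
  let g t := 2 * t * P * (t ^+ 2 + beta * t + Q) in
  g (X + v) - (g X + g v) = P * (2 * (3 * X ^+ 2 * v + 3 * X * v ^+ 2 + 2 * beta * X * v)).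
Proof. by move=> g; rewrite /g; ring. Qed.

Lemma cubic_polarization_Z8 (bk : bool) (X : 'Z_8) :
  let v : 'Z_8 := if bk then 3 else 1 in
  2 * (3 * X ^+ 2 * v + 3 * X * v ^+ 2 + 2 * bk%:R * X * v) = 2 * X * (X + 1).
Proof. by case: X => [[|[|[|[|[|[|[|[|m]]]]]]]] Hm] //; case: bk; apply/eqP. Qed.

Theorem lemma4p3 (n : nat) (hn : (0 < n)%N) (a b : 'I_n -> bool) (c : nat)
  (hc : (c < 4)%N) (ha : exists i, a i) :
  in_C (G1op a b c) (fun x => 2 * u_op hn x).
Proof.
case: ha => k ak; set F := G1op a b c; set z0 := Ordinal hn.
pose sw := tperm k z0; pose v : 'Z_8 := if b k then 3 else 1.
pose s (t : op n) j : op n := if j == k then t else fun x => x (sw j).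
pose g t : op n := fun x => F (fun j => s t j x).
have Cg t : in_C F t -> in_C F (g t).
  move=> Ct; apply: in_C_comp; first exact: G1op_ext.
  by move=> j; rewrite /s; case: (j == k); [exact: Ct | exact: in_C_var].
have CX := in_C_var F z0; have Cv := in_C_const n F v.
apply: in_C_ext (in_C_sub (Cg _ (in_C_add CX Cv)) (in_C_add (Cg _ CX) (Cg _ Cv))) => x.
have [P [Q [prodP gP]]] := G1op_slot a b c k (fun j => x (sw j)).
have sP t j : j != k -> s t j x = x (sw j) by move=> /negbTE; rewrite /s => ->.
rewrite /g /F !(gP _ (sP _)) /s eqxx /u_op.
rewrite (reindex_perm sw) prodP /sw tpermL ak !mulr1n !mul1r.
have /= -> := cubic_polarization P Q (b k)%:R (x z0) v.
by rewrite cubic_polarization_Z8 -/z0; ring.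
Qed.
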